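(* In the line network model (see context) with any erasure probabilities $p_1,\dots,p_\ell\in[0,1)$, let $T^{(1)}_n:=\sigma_n=\min\{t:\rho_2(t)=n\}$ be the time for all $n$ packets to cross the first link and $\tau_n:=T_n-T^{(1)}_n$ the additional time for the remaining innovative packets at nodes $N^{(2)},\dots,N^{(\ell)}$ to reach the destination. Then $\mathbb{E}T^{(1)}_n=\frac{n}{1-p_1}$ and $\mathbb{E}\tau_n\le\mathbb{E}\tau_{n+1}$ for all $n\ge1$ (where $\tau_{n+1}$ refers to the same model with $n+1$ source packets).
   Context: Line network model. Fix integers $\ell\ge1$, $n\ge1$ and erasure probabilities $p_1,\dots,p_\ell\in[0,1)$. Let $\{z_{t,i}\}$ be independent Bernoulli variables with $\mathbb{P}(z_{t,i}=1)=1-p_i$. The rank $\rho_i(t)$ of node $N^{(i)}$ after $t$ steps satisfies $\rho_1(t)=n$, $\rho_i(0)=0$ for $i\ge2$, and $\rho_{i+1}(t)=\rho_{i+1}(t-1)+z_{t,i}\mathbf 1\{\rho_i(t-1)>\rho_{i+1}(t-1)\}$ for $t\ge1$, $1\le i\le\ell$. The completion time is $T_n:=\min\{t\ge0:\rho_{\ell+1}(t)=n\}$. *)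

(* Line network with erasures, Bernoulli inputs z t i
   (t >= 1 time step, i in 1..l link index). *)
From Stdlib Require Import Reals Arith List Bool.
Import ListNotations.
Open Scope R_scope.

Definition config := nat -> nat -> bool.

(* rk n l z t i = rho_i(t), node index i in 1..l+1 (node 1 = source). *)
Fixpoint rk (n : nat) (z : config) (t : nat) (i : nat) : nat :=
  match t with
  | O => if (i <=? 1)%nat then n else 0%nat
  | S t' =>
      if (i <=? 1)%nat then n
      else (rk n z t' i +
            (if andb (z (S t') (i - 1)%nat) (rk n z t' i <? rk n z t' (i - 1))%nat
             then 1 else 0))%nat
  end.

(* first t in 0..m with P t, or m+1 if there is none *)
Fixpoint firstHit (P : nat -> bool) (m : nat) : nat :=
  match m with
  | O => if P O then O else 1%nat
  | S m' => let r := firstHit P m' in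
            if (r <=? m')%nat then r else if P (S m') then S m' else S (S m')
  end.

(* sigma_n = T^(1)_n = min{t : rho_2(t) = n}, computed from the first m steps *)
Definition sigmaH (n m : nat) (z : config) : nat :=
  firstHit (fun t => rk n z t 2 =? n)%nat m.
(* T_n = min{t : rho_{l+1}(t) = n}, computed from the first m steps *)
Definition TH (l n m : nat) (z : config) : nat :=
  firstHit (fun t => rk n z t (S l) =? n)%nat m.

Definition upd (z : config) (t i : nat) (b : bool) : config :=
  fun t' i' => if andb (t' =? t)%nat (i' =? i)%nat then b else z t' i'.

Definition vars (l m : nat) : list (nat * nat) :=
  flat_map (fun t => map (fun i => (t, i)) (seq 1 l)) (seq 1 m).

(* Expectation of f under the product Bernoulli law of the listed variables,
   P(z_{t,i} = 1) = 1 - p i; the other coordinates are fixed to z0. *)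
Fixpoint sumcfg (p : nat -> R) (vs : list (nat * nat)) (z0 : config)
  (f : config -> R) : R :=
  match vs with
  | [] => f z0
  | (t, i) :: vs' =>
      (1 - p i) * sumcfg p vs' (upd z0 t i true) f
      + p i * sumcfg p vs' (upd z0 t i false) f
  end.

(* E[f] for f depending only on z_{t,i}, t <= m *)
Definition Em (l : nat) (p : nat -> R) (m : nat) (f : config -> R) : R :=
  sumcfg p (vars l m) (fun _ _ => false) f.

(* Truncated expectations E[X ; T_n <= m]; by monotone convergence
   E[X] = lim_m E[X ; T_n <= m] since T_n < oo a.s. *)
Definition E_sigma_trunc (l : nat) (p : nat -> R) (n m : nat) : R :=
  Em l p m (fun z => if (TH l n m z <=? m)%nat then INR (sigmaH n m z) else 0).

Definition E_tau_trunc (l : nat) (p : nat -> R) (n m : nat) : R :=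
  Em l p m (fun z => if (TH l n m z <=? m)%nat
                     then INR (TH l n m z - sigmaH n m z) else 0).

(* The rank recursion is then generalised to an arbitrary ordered initial state.
   This yields two couplings: after a first success on link 1 the system with
   n+1 packets continues like a system started with one packet at N^(2), and
   every node of that system holds the same number of packets as in the empty
   n-packet system, or one more.
   Whenever all links succeed for n+l consecutive steps the transmission is
   complete, so P(T_n > m) decays geometrically; hence m P(T_n > m) -> 0 and the
   truncated expectations converge.

   (1) Before sigma_n every success of link 1 delivers a packet to N^(2), which
       gives the Wald identity E rho_2(m) = (1-p_1) E min(m, sigma_n); letting
       m -> oo yields E sigma_n = n / (1-p_1).
   (2) Conditioning on the first time step gives a renewal equation identifying
       E tau_{n+1} with the expected tau of the system started with one packet at
       N^(2); by the coupling this tau dominates tau_n. *)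

From Stdlib Require Import Reals Arith List.
From Stdlib Require Import Lia Lra FunctionalExtensionality.
Import ListNotations.
Open Scope R_scope.

(** * Finite Bernoulli expectations *)

Lemma sumcfg_app p a b z f :
  sumcfg p (a ++ b) z f = sumcfg p a z (fun w => sumcfg p b w f).
Proof.
  revert z; induction a as [|[t i] a IH]; intros z; simpl; auto.
  rewrite !IH; reflexivity.
Qed.

Lemma sumcfg_ext p vs z f g :
  (forall w, f w = g w) -> sumcfg p vs z f = sumcfg p vs z g.
Proof.
  intros H; replace f with g; auto. apply functional_extensionality; auto.
Qed.

Lemma sumcfg_plus p vs z f g :
  sumcfg p vs z (fun w => f w + g w) = sumcfg p vs z f + sumcfg p vs z g.
Proof.
  revert z; induction vs as [|[t i] vs IH]; intros z; simpl; auto.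
  rewrite !IH; ring.
Qed.

Lemma sumcfg_scal p vs z c f :
  sumcfg p vs z (fun w => c * f w) = c * sumcfg p vs z f.
Proof.
  revert z; induction vs as [|[t i] vs IH]; intros z; simpl; auto.
  rewrite !IH; ring.
Qed.

Lemma sumcfg_factor p vs z g h :
  (forall w t i b, In (t, i) vs -> g (upd w t i b) = g w) ->
  sumcfg p vs z (fun w => g w * h w) = g z * sumcfg p vs z h.
Proof.
  revert z; induction vs as [|[t i] vs IH]; intros z H; simpl; auto.
  rewrite !IH by (intros; apply H; simpl; auto).
  rewrite !H by (simpl; auto). ring.
Qed.

Lemma sumcfg_unused p vs z f :
  (forall w t i b, In (t, i) vs -> f (upd w t i b) = f w) ->
  sumcfg p vs z f = f z.
Proof.
  revert z; induction vs as [|[t i] vs IH]; intros z H; simpl; auto.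
  rewrite !IH by (intros; apply H; simpl; auto).
  rewrite !H by (simpl; auto). ring.
Qed.

Lemma sumcfg_le p vs z f g :
  (forall v, In v vs -> 0 <= p (snd v) <= 1) ->
  (forall w, f w <= g w) -> sumcfg p vs z f <= sumcfg p vs z g.
Proof.
  revert z; induction vs as [|[t i] vs IH]; intros z Hp H; simpl; auto.
  assert (Hi := Hp (t, i) (or_introl eq_refl)); simpl in Hi.
  assert (A1 := IH (upd z t i true) (fun v Hv => Hp v (or_intror Hv)) H).
  assert (A2 := IH (upd z t i false) (fun v Hv => Hp v (or_intror Hv)) H).
  apply Rplus_le_compat; apply Rmult_le_compat_l; lra.
Qed.

Lemma upd_same w t i b : upd w t i b t i = b.
Proof. unfold upd. rewrite !Nat.eqb_refl. reflexivity. Qed.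

Lemma upd_other w t i b t' i' : (t', i') <> (t, i) -> upd w t i b t' i' = w t' i'.
Proof.
  intros H. unfold upd.
  destruct (Nat.eqb_spec t' t); destruct (Nat.eqb_spec i' i); subst; simpl; auto.
  congruence.
Qed.

Lemma sumcfg_cond_var p vs z a b F G :
  ~ In (a, b) vs ->
  sumcfg p vs z (fun w => if w a b then F w else G w) =
  if z a b then sumcfg p vs z F else sumcfg p vs z G.
Proof.
  revert z; induction vs as [|[t i] vs IH]; intros z Hn; simpl; auto.
  rewrite !IH by (intro; apply Hn; simpl; auto).
  rewrite !upd_other by (intro E; inversion E; subst; apply Hn; simpl; auto).
  destruct (z a b); reflexivity.
Qed.

Definition allTrue (vs : list (nat * nat)) (w : config) : R :=
  if forallb (fun v => w (fst v) (snd v)) vs then 1 else 0.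

Fixpoint prodR (s : list R) : R := match s with [] => 1 | a :: s' => a * prodR s' end.

Lemma prodR_app s s' : prodR (s ++ s') = prodR s * prodR s'.
Proof. induction s as [|u s IH]; simpl; [ring | rewrite IH; ring]. Qed.

Lemma sumcfg_allTrue p vs z g : NoDup vs ->
  (forall w t i b, In (t, i) vs -> g (upd w t i b) = g w) ->
  sumcfg p vs z (fun w => g w * allTrue vs w) =
  g z * prodR (map (fun v => 1 - p (snd v)) vs).
Proof.
  revert z g; induction vs as [|[t i] vs IH]; intros z g ND H.
  - simpl. unfold allTrue. simpl. ring.
  - inversion ND as [|? ? Hn ND']; subst. simpl sumcfg.
    assert (E : forall z', sumcfg p vs z' (fun w => g w * allTrue ((t, i) :: vs) w) =
                 sumcfg p vs z' (fun w => (g w * (if w t i then 1 else 0)) * allTrue vs w)).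
    { intros z'. apply sumcfg_ext. intros w. unfold allTrue. simpl.
      destruct (w t i); simpl; ring. }
    assert (Hg : forall w t' i' b, In (t', i') vs ->
              g (upd w t' i' b) * (if upd w t' i' b t i then 1 else 0) =
              g w * (if w t i then 1 else 0)).
    { intros w t' i' b Hin. rewrite H by (simpl; auto).
      rewrite upd_other; auto. intros Heq; inversion Heq; subst; auto. }
    rewrite !E, !IH by auto.
    rewrite !upd_same, !H by (simpl; auto). simpl. ring.
Qed.

Definition shift (z : config) : config := fun t i => z (S t) i.
Definition shup (v : nat * nat) := (S (fst v), snd v).

Lemma sumcfg_shift p vs z H :
  sumcfg p (map shup vs) z (fun w => H (shift w)) = sumcfg p vs (shift z) H.
Proof.
  revert z; induction vs as [|[t i] vs IH]; intros z; simpl; auto.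
  rewrite !IH. reflexivity.
Qed.

Definition layer (l t : nat) := map (fun i => (t, i)) (seq 1 l).
Definition block (l a b : nat) := flat_map (fun t => layer l t) (seq (S a) b).

Lemma in_layer l t0 t i : In (t, i) (layer l t0) <-> (t = t0 /\ (1 <= i <= l)%nat).
Proof.
  unfold layer. rewrite in_map_iff. split.
  - intros [i' [E H]]; inversion E; subst. apply in_seq in H; lia.
  - intros [-> H]. exists i; split; auto. apply in_seq; lia.
Qed.

Lemma in_block l a b t i : In (t, i) (block l a b) <-> ((a < t <= a + b)%nat /\ (1 <= i <= l)%nat).
Proof.
  unfold block. rewrite in_flat_map. split.
  - intros [t' [H1 H2]]. apply in_layer in H2. apply in_seq in H1. lia.
  - intros [H1 H2]. exists t. split. apply in_seq; lia. apply in_layer; auto.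
Qed.

Lemma in_vars l m t i : In (t, i) (vars l m) <-> ((1 <= t <= m)%nat /\ (1 <= i <= l)%nat).
Proof.
  unfold vars. rewrite in_flat_map. split.
  - intros [t' [H1 H2]]. apply in_map_iff in H2. destruct H2 as [i' [E H3]].
    inversion E; subst. apply in_seq in H1; apply in_seq in H3. lia.
  - intros [H1 H2]. exists t. split. apply in_seq; lia.
    apply in_map_iff. exists i. split; auto. apply in_seq; lia.
Qed.

Lemma vars_add l a b : vars l (a + b) = vars l a ++ block l a b.
Proof. unfold vars, block. rewrite seq_app, flat_map_app. reflexivity. Qed.

Lemma vars_S_last l m : vars l (S m) = vars l m ++ layer l (S m).
Proof.
  unfold vars. rewrite seq_S, flat_map_app. simpl. rewrite app_nil_r. reflexivity.
Qed.

Lemma vars_S_first l m : vars l (S m) = layer l 1 ++ map shup (vars l m).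
Proof.
  unfold vars. change (seq 1 (S m)) with (1%nat :: seq 2 m).
  rewrite <- (seq_shift m 1). cbn [flat_map]. f_equal.
  induction (seq 1 m) as [|t s IH]; simpl; auto.
  rewrite IH, map_app, map_map. reflexivity.
Qed.

Lemma NoDup_block l a b : NoDup (block l a b).
Proof.
  unfold block. generalize (seq_NoDup b (S a)). generalize (seq (S a) b) as s.
  induction s as [|t s IH]; intros ND; simpl. constructor.
  inversion ND; subst. apply NoDup_app.
  - unfold layer. apply NoDup_map_inv with (f := snd). rewrite map_map. simpl.
    rewrite map_id. apply seq_NoDup.
  - apply IH; auto.
  - intros [t0 i0] Ha Hb. apply in_layer in Ha. destruct Ha as [-> _].
    apply in_flat_map in Hb. destruct Hb as [t'' [H3 H4]].
    apply in_layer in H4. destruct H4; subst; auto.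
Qed.

Definition qAll (l : nat) (p : nat -> R) := prodR (map (fun i => 1 - p i) (seq 1 l)).

Lemma prod_block l p a b : prodR (map (fun v => 1 - p (snd v)) (block l a b)) = qAll l p ^ b.
Proof.
  unfold block. revert a; induction b as [|b IH]; intros a; simpl; auto.
  rewrite map_app, prodR_app, IH. unfold layer, qAll. rewrite map_map. reflexivity.
Qed.

(* Admissible erasure probabilities, as in the theorem, and the weaker
   condition under which [Em] is a positive functional. *)
Definition erasure_probs (l : nat) (p : nat -> R) :=
  forall i, (1 <= i <= l)%nat -> 0 <= p i < 1.
Definition probs_ok (l : nat) (p : nat -> R) :=
  forall i, (1 <= i <= l)%nat -> 0 <= p i <= 1.

Lemma erasure_probs_ok l p : erasure_probs l p -> probs_ok l p.
Proof. intros H i Hi. specialize (H i Hi). lra. Qed.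

Lemma qAll_bounds l p : erasure_probs l p -> 0 < qAll l p <= 1.
Proof.
  intros H. unfold qAll. assert (Hs : forall i, In i (seq 1 l) -> 0 <= p i < 1)
    by (intros i Hi; apply in_seq in Hi; apply H; lia).
  clear H. induction (seq 1 l) as [|i s IH]; simpl. lra.
  assert (A := Hs i (or_introl eq_refl)).
  destruct (IH (fun j Hj => Hs j (or_intror Hj))).
  split. apply Rmult_lt_0_compat; lra. nra.
Qed.

Definition depends_upto (m : nat) (f : config -> R) :=
  forall z z', (forall t i, (t <= m)%nat -> z t i = z' t i) -> f z = f z'.
Definition ignores_time0 (f : config -> R) :=
  forall z z', (forall t i, (1 <= t)%nat -> z t i = z' t i) -> f z = f z'.
Definition depends_window (m : nat) (f : config -> R) :=
  forall z z', (forall t i, (1 <= t <= m)%nat -> z t i = z' t i) -> f z = f z'.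

Lemma window_upto m f : depends_window m f -> depends_upto m f.
Proof. intros D z z' H. apply D. intros; apply H; lia. Qed.

Lemma window_ignores_time0 m f : depends_window m f -> ignores_time0 f.
Proof. intros D z z' H. apply D. intros; apply H; lia. Qed.

Lemma depends_upto_upd m f w t i b :
  depends_upto m f -> (m < t)%nat -> f (upd w t i b) = f w.
Proof.
  intros D Ht. apply D. intros t' i' Ht'. apply upd_other. intro E; inversion E; lia.
Qed.

Lemma sumcfg_ignores_time0 p vs z z' f : ignores_time0 f ->
  (forall t i, (1 <= t)%nat -> z t i = z' t i) ->
  sumcfg p vs z f = sumcfg p vs z' f.
Proof.
  revert z z'; induction vs as [|[t i] vs IH]; intros z z' D H; simpl; auto.
  rewrite (IH (upd z t i true) (upd z' t i true)), (IH (upd z t i false) (upd z' t i false));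
    auto; intros; unfold upd; destruct (_ && _)%bool; auto.
Qed.

Lemma Em_ext l p m f g : (forall w, f w = g w) -> Em l p m f = Em l p m g.
Proof. apply sumcfg_ext. Qed.

Lemma Em_plus l p m f g : Em l p m (fun w => f w + g w) = Em l p m f + Em l p m g.
Proof. apply sumcfg_plus. Qed.

Lemma Em_scal l p m c f : Em l p m (fun w => c * f w) = c * Em l p m f.
Proof. apply sumcfg_scal. Qed.

Lemma Em_cst l p m c : Em l p m (fun _ => c) = c.
Proof. unfold Em. apply sumcfg_unused; auto. Qed.

Lemma Em_le l p m f g : probs_ok l p -> (forall w, f w <= g w) -> Em l p m f <= Em l p m g.
Proof.
  intros Hp H. apply sumcfg_le; auto. intros [t i] Hv. apply in_vars in Hv.
  apply Hp; simpl; lia.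
Qed.

Lemma Rabs_le_between x b : Rabs x <= b -> - b <= x <= b.
Proof.
  intros H. pose proof (Rle_abs x). pose proof (Rle_abs (- x)). rewrite Rabs_Ropp in *. lra.
Qed.

Lemma Em_abs l p m f g h : probs_ok l p -> (forall z, Rabs (f z - g z) <= h z) ->
  Rabs (Em l p m f - Em l p m g) <= Em l p m h.
Proof.
  intros Hp H. apply Rabs_le. split.
  - assert (A : Em l p m (fun z => g z + (-1) * h z) <= Em l p m f).
    { apply Em_le; auto. intros z. specialize (H z). apply Rabs_le_between in H. lra. }
    rewrite Em_plus, Em_scal in A. lra.
  - assert (A : Em l p m f <= Em l p m (fun z => g z + h z)).
    { apply Em_le; auto. intros z. specialize (H z). apply Rabs_le_between in H. lra. }
    rewrite Em_plus in A. lra.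
Qed.

Lemma Em_horizon l p m m' f : depends_upto m f -> (m <= m')%nat -> Em l p m' f = Em l p m f.
Proof.
  intros D H. replace m' with ((m' - m) + m)%nat by lia.
  induction (m' - m)%nat as [|k IH]; simpl; auto.
  unfold Em in *. rewrite vars_S_last, sumcfg_app, <- IH. apply sumcfg_ext. intros w.
  apply sumcfg_unused. intros w' t i b Hin. apply in_layer in Hin. destruct Hin as [-> _].
  apply (depends_upto_upd m); auto; lia.
Qed.

Lemma Em_last l p m f :
  Em l p (S m) f = Em l p m (fun z => sumcfg p (layer l (S m)) z f).
Proof. unfold Em. rewrite vars_S_last, sumcfg_app. reflexivity. Qed.

Lemma Em_first_step l p m F G : (1 <= l)%nat -> ignores_time0 F -> ignores_time0 G ->
  Em l p (S m) (fun z => if z 1%nat 1%nat then F (shift z) else G (shift z)) =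
  (1 - p 1%nat) * Em l p m F + p 1%nat * Em l p m G.
Proof.
  intros Hl HF HG. unfold Em. rewrite vars_S_first, sumcfg_app.
  set (H := fun z : config => if z 1%nat 1%nat then sumcfg p (vars l m) (shift z) F
                     else sumcfg p (vars l m) (shift z) G).
  rewrite (sumcfg_ext _ _ _ _ H).
  2:{ intros w. unfold H. rewrite sumcfg_cond_var, !sumcfg_shift; auto.
      intros Hin. apply in_map_iff in Hin. destruct Hin as [[t i] [E Hv]].
      apply in_vars in Hv. inversion E. lia. }
  assert (Hshift : forall (K : config -> R) w i b, ignores_time0 K ->
            sumcfg p (vars l m) (shift (upd w 1 i b)) K = sumcfg p (vars l m) (shift w) K).
  { intros K w i b HK. apply sumcfg_ignores_time0; auto.
    intros t j Ht. destruct t; [lia|]. reflexivity. }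
  assert (Hunused : forall w t i b, In (t, i) (map (fun i => (1%nat, i)) (seq 2 (l - 1))) ->
            H (upd w t i b) = H w).
  { intros w t i b Hin. apply in_map_iff in Hin. destruct Hin as [i' [E Hi]].
    inversion E; subst. apply in_seq in Hi. unfold H.
    rewrite upd_other by (intro E1; inversion E1; lia). rewrite !Hshift; auto. }
  destruct l as [|l']; [lia|]. unfold layer. simpl. replace (S l' - 1)%nat with l' in Hunused by lia.
  rewrite !(sumcfg_unused p _ _ H) by exact Hunused.
  unfold H. rewrite !upd_same, !Hshift by auto. reflexivity.
Qed.


Definition upward_closed (P : nat -> bool) :=
  forall t t', (t <= t')%nat -> P t = true -> P t' = true.

Lemma firstHit_spec (P : nat -> bool) m :
  ((firstHit P m <= m)%nat /\ P (firstHit P m) = true /\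
     forall t, (t < firstHit P m)%nat -> P t = false)
  \/ (firstHit P m = S m /\ forall t, (t <= m)%nat -> P t = false).
Proof.
  induction m as [|m IH]; simpl.
  - destruct (P 0%nat) eqn:E.
    + left. repeat split; auto; intros; lia.
    + right. split; auto. intros t Ht. assert (t = 0%nat) by lia; subst; auto.
  - destruct IH as [[H1 [H2 H3]]|[H1 H2]].
    + replace (firstHit P m <=? m)%nat with true by (symmetry; apply Nat.leb_le; auto).
      left. repeat split; auto.
    + rewrite H1. replace (S m <=? m)%nat with false by (symmetry; apply Nat.leb_gt; lia).
      destruct (P (S m)) eqn:E.
      * left. repeat split; auto. intros t Ht. apply H2; lia.
      * right. split; auto. intros t Ht. destruct (Nat.eq_dec t (S m)); subst; auto.
        apply H2; lia.
Qed.

Lemma firstHit_le P m t : (t <= m)%nat -> P t = true -> (firstHit P m <= t)%nat.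
Proof.
  intros Ht Hp. destruct (firstHit_spec P m) as [[H1 [H2 H3]]|[H1 H2]].
  - destruct (Nat.le_gt_cases (firstHit P m) t); auto. rewrite H3 in Hp; auto; discriminate.
  - rewrite H2 in Hp; auto; discriminate.
Qed.

Lemma firstHit_le_iff P m : upward_closed P -> ((firstHit P m <= m)%nat <-> P m = true).
Proof.
  intros M. destruct (firstHit_spec P m) as [[H1 [H2 H3]]|[H1 H2]].
  - split; auto. intros _. apply (M _ _ H1 H2).
  - split; intros H. lia. rewrite H2 in H; auto; discriminate.
Qed.

Lemma firstHit_lt_iff P m t : upward_closed P -> (t <= m)%nat ->
  ((t < firstHit P m)%nat <-> P t = false).
Proof.
  intros M Ht. destruct (firstHit_spec P m) as [[H1 [H2 H3]]|[H1 H2]].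
  - split; auto. intros Hf. destruct (Nat.lt_ge_cases t (firstHit P m)); auto.
    rewrite (M _ _ H H2) in Hf; discriminate.
  - split; intros; auto; lia.
Qed.

Lemma firstHit_ext P Q m : (forall t, (t <= m)%nat -> P t = Q t) -> firstHit P m = firstHit Q m.
Proof.
  induction m as [|m IH]; intros H; simpl.
  - rewrite H; auto.
  - rewrite IH by (intros; apply H; lia). rewrite H; auto.
Qed.

Lemma firstHit_stable P m m' :
  (firstHit P m <= m)%nat -> (m <= m')%nat -> firstHit P m' = firstHit P m.
Proof.
  intros H1 H2. induction H2 as [|m' H2 IH]; auto.
  simpl. rewrite IH.
  replace (firstHit P m <=? m')%nat with true by (symmetry; apply Nat.leb_le; lia). auto.
Qed.

Lemma firstHit_shift P m : P 0%nat = false ->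
  firstHit P (S m) = S (firstHit (fun t => P (S t)) m).
Proof.
  intros H0. induction m as [|m IH].
  - simpl. rewrite H0. simpl. destruct (P 1%nat); auto.
  - change (firstHit P (S (S m))) with
      (let r := firstHit P (S m) in
       if (r <=? S m)%nat then r else if P (S (S m)) then S (S m) else S (S (S m))).
    rewrite IH.
    assert (E: firstHit (fun t => P (S t)) (S m) =
      (let r := firstHit (fun t => P (S t)) m in
       if (r <=? m)%nat then r else if P (S (S m)) then S m else S (S m))) by reflexivity.
    rewrite E. cbv zeta.
    change ((S (firstHit (fun t : nat => P (S t)) m) <=? S m)%nat)
      with ((firstHit (fun t : nat => P (S t)) m <=? m)%nat).
    destruct (firstHit (fun t : nat => P (S t)) m <=? m)%nat; auto.
    destruct (P (S (S m))); auto.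
Qed.

Lemma firstHit_mono P Q m :
  (forall t, Q t = true -> P t = true) -> (firstHit P m <= firstHit Q m)%nat.
Proof.
  intros H. destruct (firstHit_spec Q m) as [[H1 [H2 H3]]|[H1 H2]].
  - apply firstHit_le; auto.
  - rewrite H1. destruct (firstHit_spec P m) as [[H4 _]|[H4 _]]; lia.
Qed.

(** * Rank dynamics from an arbitrary initial state *)

Section Ranks.
Local Open Scope nat_scope.

Fixpoint ranks (top : nat) (x : nat -> nat) (z : config) (t i : nat) : nat :=
  match t with
  | O => if i <=? 1 then top else x i
  | S t' =>
      if i <=? 1 then top
      else ranks top x z t' i +
           (if andb (z (S t') (i - 1)) (ranks top x z t' i <? ranks top x z t' (i - 1))
            then 1 else 0)
  end.

Definition init0 : nat -> nat := fun _ => 0.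
(* one packet has already reached N^(2) *)
Definition init_one : nat -> nat := fun j => if j =? 2 then 1 else 0.

Lemma rk_ranks n z t i : rk n z t i = ranks n init0 z t i.
Proof. revert i; induction t as [|t IH]; intros i; simpl; auto. rewrite !IH. reflexivity. Qed.

Lemma ranks_source top x z t i : i <= 1 -> ranks top x z t i = top.
Proof. intros H; destruct t; simpl; replace (i <=? 1) with true by (symmetry; apply Nat.leb_le; auto); auto. Qed.

Lemma ranks_init top x z i : 2 <= i -> ranks top x z 0 i = x i.
Proof. intros H. simpl. replace (i <=? 1) with false by (symmetry; apply Nat.leb_gt; lia). auto. Qed.

Lemma ranks_step top x z t i : 2 <= i ->
  ranks top x z (S t) i = ranks top x z t i +
     (if andb (z (S t) (i - 1)) (ranks top x z t i <? ranks top x z t (i - 1)) then 1 else 0).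
Proof. intros H. simpl. replace (i <=? 1) with false by (symmetry; apply Nat.leb_gt; lia). auto. Qed.

Definition ordered_init (top : nat) (x : nat -> nat) :=
  forall i, 2 <= i -> x i <= (if i - 1 <=? 1 then top else x (i - 1)).

Lemma ordered_init0 n : ordered_init n init0.
Proof. intros i _. unfold init0. lia. Qed.

Lemma ordered_init_one n : ordered_init (S n) init_one.
Proof. intros i Hi. unfold init_one. destruct (Nat.eqb_spec i 2); [subst; simpl; lia | lia]. Qed.

Section Ordered.
Variables (top : nat) (x : nat -> nat).
Hypothesis Hx : ordered_init top x.

Lemma ranks_ordered z t i : 2 <= i -> ranks top x z t i <= ranks top x z t (i - 1).
Proof.
  revert i; induction t as [|t IH]; intros i Hi.
  - rewrite ranks_init by lia. destruct (Nat.le_gt_cases (i - 1) 1).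
    + rewrite ranks_source by auto. specialize (Hx i Hi).
      replace (i - 1 <=? 1) with true in Hx by (symmetry; apply Nat.leb_le; auto). auto.
    + rewrite ranks_init by lia. specialize (Hx i Hi).
      replace (i - 1 <=? 1) with false in Hx by (symmetry; apply Nat.leb_gt; auto). auto.
  - assert (A := IH i Hi). rewrite ranks_step by lia.
    destruct (Nat.le_gt_cases (i - 1) 1).
    + rewrite !(ranks_source _ _ _ _ (i - 1)) in * by auto.
      destruct (z (S t) (i - 1)); simpl; [|lia].
      destruct (Nat.ltb_spec (ranks top x z t i) top); lia.
    + rewrite (ranks_step _ _ _ _ (i - 1)) by lia.
      destruct (z (S t) (i - 1)); simpl; [|lia].
      destruct (Nat.ltb_spec (ranks top x z t i) (ranks top x z t (i - 1))); lia.
Qed.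

Lemma ranks_antitone z t i j : j <= i -> ranks top x z t i <= ranks top x z t j.
Proof.
  intros H. induction H. lia.
  destruct (Nat.le_gt_cases (S m) 1).
  - rewrite !ranks_source by lia. lia.
  - assert (A := ranks_ordered z t (S m) ltac:(lia)). simpl in A.
    replace (m - 0) with m in A by lia. lia.
Qed.

Lemma ranks_le_source z t i : ranks top x z t i <= top.
Proof.
  assert (A := ranks_antitone z t i 0 ltac:(lia)). rewrite (ranks_source top x z t 0) in A by lia. exact A.
Qed.

Lemma ranks_burst z l a s :
  (forall t i, a < t <= a + s -> 1 <= i <= l -> z t i = true) ->
  forall i, 2 <= i <= S l -> Nat.min top (s + 2 - i) <= ranks top x z (a + s) i.
Proof.
  intros Hz. induction s as [|s IH]; intros i Hi.
  - lia.
  - replace (a + S s) with (S (a + s)) by lia. rewrite ranks_step by lia.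
    rewrite Hz by lia. rewrite Bool.andb_true_l.
    assert (Hz' : forall t i, a < t <= a + s -> 1 <= i <= l -> z t i = true)
      by (intros; apply Hz; lia).
    assert (T1 := ranks_le_source z (a + s) (i - 1)).
    destruct (Nat.ltb_spec (ranks top x z (a + s) i) (ranks top x z (a + s) (i - 1))).
    + assert (A := IH Hz' i Hi). lia.
    + destruct (Nat.le_gt_cases (i - 1) 1).
      * rewrite ranks_source in H by auto. lia.
      * assert (A := IH Hz' (i - 1) ltac:(lia)). lia.
Qed.

Lemma ranks_burst_complete z l a : 1 <= l ->
  (forall t i, a < t <= a + (top + l) -> 1 <= i <= l -> z t i = true) ->
  ranks top x z (a + (top + l)) (S l) = top.
Proof.
  intros Hl Hz. assert (A := ranks_burst z l a (top + l) Hz (S l) ltac:(lia)).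
  assert (B := ranks_le_source z (a + (top + l)) (S l)). lia.
Qed.

End Ordered.

Lemma ranks_mono_step top x z t i : ranks top x z t i <= ranks top x z (S t) i.
Proof.
  destruct (Nat.le_gt_cases i 1). rewrite !ranks_source; lia.
  rewrite ranks_step by lia. lia.
Qed.

Lemma ranks_mono top x z t t' i : t <= t' -> ranks top x z t i <= ranks top x z t' i.
Proof. intros H; induction H; auto. etransitivity; eauto. apply ranks_mono_step. Qed.

Lemma ranks_local top x z z' t i : (forall t' i', 1 <= t' <= t -> z t' i' = z' t' i') ->
  ranks top x z t i = ranks top x z' t i.
Proof.
  revert i; induction t as [|t IH]; intros i H; simpl; auto.
  rewrite !IH by (intros; apply H; lia). rewrite H by lia. reflexivity.
Qed.

Lemma ranks_init_ext top x y z t i : (forall j, 2 <= j -> x j = y j) ->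
  ranks top x z t i = ranks top y z t i.
Proof.
  intros H. revert i; induction t as [|t IH]; intros i; simpl.
  - destruct (Nat.leb_spec i 1); auto; apply H; lia.
  - rewrite !IH. reflexivity.
Qed.

Lemma ranks_shift top x z t i :
  ranks top x z (S t) i = ranks top (fun j => ranks top x z 1 j) (shift z) t i.
Proof.
  revert i; induction t as [|t IH]; intros i.
  - destruct (Nat.le_gt_cases i 1). rewrite !ranks_source; auto.
    rewrite (ranks_init _ _ (shift z)) by lia. reflexivity.
  - destruct (Nat.le_gt_cases i 1). rewrite !ranks_source; auto.
    rewrite ranks_step by lia. rewrite (ranks_step _ _ (shift z)) by lia.
    rewrite !IH. reflexivity.
Qed.

Lemma ranks_after_first_step n z t i :
  ranks (S n) init0 z (S t) i =
  ranks (S n) (if z 1 1 then init_one else init0) (shift z) t i.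
Proof.
  rewrite ranks_shift. apply ranks_init_ext. intros j Hj.
  rewrite ranks_step, ranks_init by auto. unfold init0, init_one.
  destruct (Nat.eqb_spec j 2).
  - subst. simpl. destruct (z 1 1); reflexivity.
  - rewrite ranks_init by lia. apply Nat.eqb_neq in n0.
    rewrite Nat.ltb_irrefl, Bool.andb_false_r. destruct (z 1 1); simpl; rewrite ?n0; reflexivity.
Qed.

Lemma ranks_coupling n z t i :
  (i <= 2 -> ranks (S n) init_one z t i = S (ranks n init0 z t i)) /\
  ranks n init0 z t i <= ranks (S n) init_one z t i <= S (ranks n init0 z t i).
Proof.
  revert i; induction t as [|t IH]; intros i.
  - destruct (Nat.le_gt_cases i 1). rewrite !ranks_source by auto. lia.
    rewrite !ranks_init by lia. unfold init_one, init0. destruct (Nat.eqb_spec i 2); lia.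
  - destruct (Nat.le_gt_cases i 1). rewrite !ranks_source by auto. lia.
    rewrite !ranks_step by lia.
    destruct (IH i) as [A1 A2]. destruct (IH (i - 1)) as [B1 B2].
    destruct (z (S t) (i - 1)); simpl; [|lia].
    destruct (Nat.ltb_spec (ranks n init0 z t i) (ranks n init0 z t (i - 1)));
    destruct (Nat.ltb_spec (ranks (S n) init_one z t i) (ranks (S n) init_one z t (i - 1)));
      try lia;
    (split; [|lia]; intros Hi; rewrite A1 in * by lia; rewrite B1 in * by lia; lia).
Qed.

End Ranks.

Definition complete top x l (z : config) t := (ranks top x z t (S l) =? top)%nat.
Definition notDone top x l t (z : config) : R := if complete top x l z t then 0 else 1.

Definition Tend top x l m z := firstHit (complete top x l z) m.
Definition Tlink1 top x m (z : config) := firstHit (fun t => ranks top x z t 2 =? top)%nat m.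

Definition tauTrunc top x l m z : R :=
  if (Tend top x l m z <=? m)%nat then INR (Tend top x l m z - Tlink1 top x m z) else 0.

Lemma complete_upward top x l z : ordered_init top x -> upward_closed (complete top x l z).
Proof.
  intros Hx t t' H E. unfold complete in *. apply Nat.eqb_eq in E. apply Nat.eqb_eq.
  assert (A := ranks_mono top x z t t' (S l) H).
  assert (B := ranks_le_source top x Hx z t' (S l)). lia.
Qed.

Lemma link1_upward top x z : ordered_init top x ->
  upward_closed (fun t => ranks top x z t 2 =? top)%nat.
Proof.
  intros Hx t t' H E. apply Nat.eqb_eq in E. apply Nat.eqb_eq.
  assert (A := ranks_mono top x z t t' 2 H).
  assert (B := ranks_le_source top x Hx z t' 2). lia.
Qed.

Lemma Tend_le_iff top x l m z : ordered_init top x ->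
  ((Tend top x l m z <= m)%nat <-> complete top x l z m = true).
Proof. intros Hx. apply firstHit_le_iff, complete_upward; auto. Qed.

Lemma Tlink1_le_Tend top x l m z : (1 <= l)%nat -> ordered_init top x ->
  (Tlink1 top x m z <= Tend top x l m z)%nat.
Proof.
  intros Hl Hx. apply firstHit_mono. intros t E. unfold complete in E.
  apply Nat.eqb_eq in E. apply Nat.eqb_eq.
  assert (A := ranks_antitone top x Hx z t (S l) 2 ltac:(lia)).
  assert (B := ranks_le_source top x Hx z t 2). lia.
Qed.

Lemma notDone_window top x l t : depends_window t (notDone top x l t).
Proof. intros z z' H. unfold notDone, complete. rewrite (ranks_local top x z z' t); auto. Qed.

Lemma notDone_bounds top x l t z : 0 <= notDone top x l t z <= 1.
Proof. unfold notDone. destruct (complete top x l z t); lra. Qed.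

Lemma notDone_mono top x l t t' z : ordered_init top x -> (t <= t')%nat ->
  notDone top x l t' z <= notDone top x l t z.
Proof.
  intros Hx H. unfold notDone. destruct (complete top x l z t) eqn:E.
  - rewrite (complete_upward top x l z Hx t t' H E). lra.
  - destruct (complete top x l z t'); lra.
Qed.

Lemma tauTrunc_window top x l m : depends_window m (tauTrunc top x l m).
Proof.
  intros z z' H. unfold tauTrunc, Tend, Tlink1, complete.
  rewrite (firstHit_ext (fun t => ranks top x z t (S l) =? top)%nat
                        (fun t => ranks top x z' t (S l) =? top)%nat).
  rewrite (firstHit_ext (fun t => ranks top x z t 2 =? top)%nat
                        (fun t => ranks top x z' t 2 =? top)%nat).
  reflexivity.
  all: intros t Ht; rewrite (ranks_local top x z z' t); auto; intros; apply H; lia.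
Qed.

Lemma tauTrunc_nonneg top x l m z : 0 <= tauTrunc top x l m z.
Proof. unfold tauTrunc. destruct (_ <=? _)%nat. apply pos_INR. lra. Qed.

Lemma tauTrunc_step top x l m z : (1 <= l)%nat -> ordered_init top x ->
  tauTrunc top x l m z <= tauTrunc top x l (S m) z.
Proof.
  intros Hl Hx. unfold tauTrunc. destruct (Nat.leb_spec (Tend top x l m z) m).
  - assert (E1 : Tend top x l (S m) z = Tend top x l m z) by (apply firstHit_stable; auto).
    assert (E2 : Tlink1 top x (S m) z = Tlink1 top x m z).
    { apply firstHit_stable; auto. assert (A := Tlink1_le_Tend top x l m z Hl Hx).
      unfold Tlink1, Tend in *. lia. }
    rewrite E1, E2. replace (Tend top x l m z <=? S m)%nat with true
      by (symmetry; apply Nat.leb_le; lia). lra.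
  - destruct (_ <=? _)%nat. apply pos_INR. lra.
Qed.

(** * Geometric decay of P(T > m) *)

(* During any W = top + l steps, all links succeed throughout with probability
   qAll^W, and this completes the transmission. *)
Lemma notDone_block l p top x k : (1 <= l)%nat -> ordered_init top x -> erasure_probs l p ->
  let W := (top + l)%nat in
  Em l p (k * W + W) (notDone top x l (k * W + W)) <=
  (1 - qAll l p ^ W) * Em l p (k * W) (notDone top x l (k * W)).
Proof.
  intros Hl Hx Hp W. assert (Hok := erasure_probs_ok l p Hp).
  unfold Em at 1. rewrite vars_add, sumcfg_app.
  set (B := block l (k * W) W).
  apply Rle_trans with (sumcfg p (vars l (k * W)) (fun _ _ => false)
     (fun z => sumcfg p B z (fun w => notDone top x l (k * W) w * (1 - allTrue B w)))).
  - apply sumcfg_le.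
    { intros [t i] Hv. apply in_vars in Hv. apply Hok; simpl; lia. }
    intros z. apply sumcfg_le.
    { intros [t i] Hv. apply in_block in Hv. apply Hok; simpl; lia. }
    intros w. unfold allTrue. destruct (forallb _ _) eqn:Ef.
    + assert (D : complete top x l w (k * W + W) = true).
      { unfold complete. apply Nat.eqb_eq. apply ranks_burst_complete; auto.
        intros t i Ht Hi. rewrite forallb_forall in Ef. apply (Ef (t, i)). apply in_block. lia. }
      unfold notDone at 1. rewrite D. assert (N := notDone_bounds top x l (k * W) w). nra.
    + rewrite Rminus_0_r, Rmult_1_r. apply notDone_mono; auto. lia.
  - right. rewrite <- Em_scal. unfold Em. apply sumcfg_ext. intros z.
    assert (Hout : forall w t i b, In (t, i) B ->
              notDone top x l (k * W) (upd w t i b) = notDone top x l (k * W) w).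
    { intros w t i b Hin. apply in_block in Hin.
      apply (depends_upto_upd (k * W)); [apply window_upto, notDone_window | lia]. }
    rewrite sumcfg_factor by exact Hout.
    rewrite (sumcfg_ext _ _ _ _ (fun w => 1 + (-1) * ((fun _ => 1) w * allTrue B w)))
      by (intros; ring).
    rewrite sumcfg_plus, sumcfg_scal, sumcfg_allTrue, sumcfg_unused by (auto || apply NoDup_block).
    unfold B. rewrite prod_block. ring.
Qed.

Lemma notDone_geometric l p top x k : (1 <= l)%nat -> ordered_init top x -> erasure_probs l p ->
  Em l p (k * (top + l)) (notDone top x l (k * (top + l))) <= (1 - qAll l p ^ (top + l)) ^ k.
Proof.
  intros Hl Hx Hp. set (W := (top + l)%nat).
  assert (Hq := qAll_bounds l p Hp).
  assert (HqW : qAll l p ^ W <= 1) by (rewrite <- (pow1 W); apply pow_incr; lra).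
  induction k as [|k IH].
  - simpl. rewrite <- (Em_cst l p 0 1). apply Em_le. apply erasure_probs_ok; auto.
    intros w; apply notDone_bounds.
  - replace (S k * W)%nat with (k * W + W)%nat by lia.
    eapply Rle_trans. apply notDone_block; auto. simpl.
    apply Rmult_le_compat_l; auto. lra.
Qed.

Fixpoint sumR (a : nat -> R) (m : nat) : R :=
  match m with O => 0 | S m' => sumR a m' + a m' end.

Lemma sumR_add a x y : sumR a (x + y) = sumR a x + sumR (fun j => a (x + j)%nat) y.
Proof.
  induction y as [|y IH]; simpl. rewrite Nat.add_0_r; ring.
  rewrite Nat.add_succ_r. simpl. rewrite IH. ring.
Qed.

Lemma sumR_le a b m : (forall t, (t < m)%nat -> a t <= b t) -> sumR a m <= sumR b m.
Proof.
  induction m as [|m IH]; intros H; simpl. lra.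
  apply Rplus_le_compat. apply IH; intros; apply H; lia. apply H; lia.
Qed.

Lemma sumR_mono_m a m m' : (forall t, 0 <= a t) -> (m <= m')%nat -> sumR a m <= sumR a m'.
Proof. intros H Hm. induction Hm. lra. simpl. specialize (H m0). lra. Qed.

Lemma sumR_cst c m : sumR (fun _ => c) m = INR m * c.
Proof. induction m; simpl sumR. simpl; ring. rewrite IHm, S_INR. ring. Qed.

Lemma geo_sum_le r K : 0 <= r < 1 -> sumR (fun k => r ^ k) K <= / (1 - r).
Proof.
  intros Hr. assert (E : (1 - r) * sumR (fun k => r ^ k) K = 1 - r ^ K).
  { induction K as [|K IH]; simpl. ring. rewrite Rmult_plus_distr_l, IH. ring. }
  assert (0 <= r ^ K) by (apply pow_le; lra).
  apply Rmult_le_reg_l with (1 - r). lra. rewrite E, Rinv_r by lra. lra.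
Qed.

Lemma pow_anti r a b : 0 <= r <= 1 -> (a <= b)%nat -> r ^ b <= r ^ a.
Proof.
  intros Hr H. replace b with (a + (b - a))%nat by lia. rewrite pow_add.
  assert (0 <= r ^ a) by (apply pow_le; lra).
  assert (r ^ (b - a) <= 1) by (rewrite <- (pow1 (b - a)); apply pow_incr; lra).
  assert (0 <= r ^ (b - a)) by (apply pow_le; lra). nra.
Qed.

(* (j+1) r^j <= 1 + r + ... + r^j <= 1/(1-r) *)
Lemma succ_mul_pow_le r j : 0 <= r < 1 -> INR (S j) * r ^ j <= / (1 - r).
Proof.
  intros Hr. eapply Rle_trans; [|apply (geo_sum_le r (S j) Hr)].
  rewrite <- sumR_cst. apply sumR_le. intros t Ht. apply pow_anti; lra || lia.
Qed.

Section GeometricTail.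
Variables (a : nat -> R) (W : nat) (r : R).
Hypotheses (Ha : forall m, 0 <= a m) (HW : (1 <= W)%nat) (Hr : 0 <= r < 1)
  (Hb : forall k m, (k * W <= m)%nat -> a m <= r ^ k).

Lemma tail_sum m : sumR a m <= INR W / (1 - r).
Proof.
  assert (Blocks : forall K, sumR a (K * W) <= INR W * sumR (fun k => r ^ k) K).
  { induction K as [|K IH]; simpl. lra.
    replace (W + K * W)%nat with (K * W + W)%nat by lia. rewrite sumR_add.
    rewrite Rmult_plus_distr_l. apply Rplus_le_compat; auto.
    rewrite <- sumR_cst. apply sumR_le. intros t Ht. apply Hb. lia. }
  eapply Rle_trans. apply (sumR_mono_m a m (m * W)); auto. nia.
  eapply Rle_trans. apply Blocks. unfold Rdiv. apply Rmult_le_compat_l.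
  apply pos_INR. apply geo_sum_le; auto.
Qed.

Lemma tail_weighted_bound m : INR m * a m <= 2 * INR W / (1 - r) * r ^ (m / W / 2).
Proof.
  set (K := (m / W)%nat). set (j := (K / 2)%nat).
  assert (HK1 : (K * W <= m)%nat) by (unfold K; rewrite Nat.mul_comm; apply Nat.Div0.mul_div_le).
  assert (HK2 : (m < W * S K)%nat) by (apply Nat.mul_succ_div_gt; lia).
  assert (Hj1 : (2 * j <= K)%nat) by (unfold j; apply Nat.Div0.mul_div_le).
  assert (Hj2 : (K < 2 * S j)%nat) by (apply Nat.mul_succ_div_gt; lia).
  assert (A1 : a m <= r ^ j * r ^ j) by (rewrite <- pow_add; apply Hb; nia).
  assert (A2 : INR m <= INR W * (2 * INR (S j))).
  { replace 2 with (INR 2) by (simpl; ring). rewrite <- !mult_INR. apply le_INR. nia. }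
  assert (A3 := succ_mul_pow_le r j Hr).
  assert (P0 : 0 <= r ^ j) by (apply pow_le; lra).
  assert (P1 := pos_INR W). assert (P2 := pos_INR m). assert (P3 := pos_INR (S j)).
  apply Rle_trans with (2 * INR W * r ^ j * (INR (S j) * r ^ j)).
  { apply Rle_trans with (INR W * (2 * INR (S j)) * (r ^ j * r ^ j)).
    apply Rmult_le_compat; auto. right; ring. }
  unfold Rdiv. replace (2 * INR W * / (1 - r) * r ^ j) with (2 * INR W * r ^ j * / (1 - r)) by ring.
  apply Rmult_le_compat_l; auto. apply Rmult_le_pos; auto. lra.
Qed.

Lemma tail_weighted_cv : Un_cv (fun m => INR m * a m) 0.
Proof.
  intros eps Heps. set (C := 2 * INR W / (1 - r)).
  assert (HC : 0 < C).
  { unfold C. apply Rdiv_lt_0_compat; [|lra].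
    assert (1 <= INR W) by (replace 1 with (INR 1) by auto; apply le_INR; auto). lra. }
  destruct (pow_lt_1_zero r ltac:(rewrite Rabs_right; lra) (eps / C)
              ltac:(apply Rdiv_lt_0_compat; lra)) as [N0 HN0].
  exists (2 * N0 * W)%nat. intros m Hm. unfold Rdist. rewrite Rminus_0_r.
  assert (P : 0 <= INR m * a m) by (apply Rmult_le_pos; auto; apply pos_INR).
  rewrite Rabs_right by lra.
  eapply Rle_lt_trans. apply tail_weighted_bound. fold C.
  assert (Hj : (N0 <= m / W / 2)%nat).
  { apply Nat.div_le_lower_bound. lia. apply Nat.div_le_lower_bound. lia. lia. }
  specialize (HN0 _ Hj). rewrite Rabs_right in HN0 by (apply Rle_ge, pow_le; lra).
  apply Rmult_lt_compat_l with (r := C) in HN0; auto.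
  replace (C * (eps / C)) with eps in HN0 by (field; lra). lra.
Qed.

End GeometricTail.

Definition probNotDone l p top x m := Em l p m (notDone top x l m).

Lemma probNotDone_nonneg l p top x m : probs_ok l p -> 0 <= probNotDone l p top x m.
Proof.
  intros Hp. unfold probNotDone. rewrite <- (Em_cst l p m 0). apply Em_le; auto.
  intros; apply notDone_bounds.
Qed.

Lemma decay_rate_bounds l p top : erasure_probs l p -> 0 <= 1 - qAll l p ^ (top + l) < 1.
Proof.
  intros Hp. assert (Hq := qAll_bounds l p Hp).
  assert (0 < qAll l p ^ (top + l)) by (apply pow_lt; lra).
  assert (qAll l p ^ (top + l) <= 1) by (rewrite <- (pow1 (top + l)); apply pow_incr; lra).
  lra.
Qed.

Section Tail.
Variables (l : nat) (p : nat -> R) (top : nat) (x : nat -> nat).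
Hypotheses (Hl : (1 <= l)%nat) (Hx : ordered_init top x) (Hp : erasure_probs l p).

Lemma probNotDone_tail k m : (k * (top + l) <= m)%nat ->
  probNotDone l p top x m <= (1 - qAll l p ^ (top + l)) ^ k.
Proof.
  intros Hm. unfold probNotDone. eapply Rle_trans; [|apply (notDone_geometric l p top x k); auto].
  rewrite <- (Em_horizon l p (k * (top + l)) m) by first [lia | apply window_upto, notDone_window].
  apply Em_le. apply erasure_probs_ok; auto. intros; apply notDone_mono; auto.
Qed.

Lemma probNotDone_weighted_cv : Un_cv (fun m => INR m * probNotDone l p top x m) 0.
Proof.
  apply (tail_weighted_cv _ (top + l) (1 - qAll l p ^ (top + l))).
  - intros; apply probNotDone_nonneg, erasure_probs_ok; auto.
  - lia.
  - apply decay_rate_bounds; auto.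
  - apply probNotDone_tail.
Qed.

(* tau <= T = #{t < m : not complete at t} on the event T <= m *)
Lemma tauTrunc_le_sum m z :
  tauTrunc top x l m z <= sumR (fun t => notDone top x l t z) m.
Proof.
  assert (Count : forall k, (k <= m)%nat ->
            sumR (fun t => notDone top x l t z) k = INR (Nat.min k (Tend top x l m z))).
  { induction k as [|k IH]; intros Hk. reflexivity.
    simpl sumR. rewrite IH by lia.
    assert (L := firstHit_lt_iff (complete top x l z) m k (complete_upward top x l z Hx) ltac:(lia)).
    fold (Tend top x l m z) in L. unfold notDone.
    destruct (complete top x l z k) eqn:E.
    - assert (~ (k < Tend top x l m z)%nat) by (intro H; apply L in H; congruence).
      replace (Nat.min (S k) (Tend top x l m z)) with (Nat.min k (Tend top x l m z)) by lia. ring.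
    - assert (H : (k < Tend top x l m z)%nat) by (apply L; auto).
      replace (Nat.min (S k) (Tend top x l m z)) with (S (Nat.min k (Tend top x l m z))) by lia.
      rewrite S_INR. ring. }
  rewrite Count by lia. unfold tauTrunc.
  destruct (Nat.leb_spec (Tend top x l m z) m).
  - apply le_INR. lia.
  - apply pos_INR.
Qed.

Lemma Em_sumR m f K :
  Em l p m (fun z => sumR (fun t => f t z) K) = sumR (fun t => Em l p m (f t)) K.
Proof. induction K as [|K IH]; simpl. apply Em_cst. rewrite Em_plus, IH. reflexivity. Qed.

(* The truncated expectations of tau increase with the horizon and are bounded
   (E T < oo), hence converge. *)
Lemma Em_tau_cv : { a | Un_cv (fun m => Em l p m (tauTrunc top x l m)) a }.
Proof.
  assert (Hok := erasure_probs_ok l p Hp).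
  apply growing_cv.
  - intros m. rewrite <- (Em_horizon l p m (S m) (tauTrunc top x l m))
      by first [lia | apply window_upto, tauTrunc_window].
    apply Em_le; auto. intros; apply tauTrunc_step; auto.
  - exists (INR (top + l) / (1 - (1 - qAll l p ^ (top + l)))). intros y [m ->].
    eapply Rle_trans. apply Em_le; auto. intros z; apply (tauTrunc_le_sum m z).
    rewrite Em_sumR.
    eapply Rle_trans; [|apply (tail_sum (probNotDone l p top x) (top + l) (1 - qAll l p ^ (top + l)))].
    + apply sumR_le. intros t Ht. unfold probNotDone. right.
      apply Em_horizon; [apply window_upto, notDone_window | lia].
    + intros; apply probNotDone_nonneg; auto.
    + lia.
    + apply decay_rate_bounds; auto.
    + apply probNotDone_tail.
Qed.

End Tail.

Lemma cv_const c : Un_cv (fun _ => c) c.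
Proof. intros eps He. exists 0%nat. intros. unfold Rdist. rewrite Rminus_diag, Rabs_R0. lra. Qed.

Lemma cv_dominated u v L :
  (forall m, (1 <= m)%nat -> Rabs (u m - L) <= v m) -> Un_cv v 0 -> Un_cv u L.
Proof.
  intros H Hv eps He. destruct (Hv eps He) as [N HN]. exists (S N). intros m Hm.
  specialize (HN m ltac:(lia)). unfold Rdist in *. rewrite Rminus_0_r in HN.
  eapply Rle_lt_trans. apply H; lia. eapply Rle_lt_trans. apply Rle_abs. exact HN.
Qed.

(** * E sigma_n = n / (1 - p_1) *)

Lemma TH_Tend l n m z : TH l n m z = Tend n init0 l m z.
Proof. unfold TH, Tend, complete. apply firstHit_ext. intros. rewrite rk_ranks. reflexivity. Qed.

Lemma sigmaH_Tlink1 n m z : sigmaH n m z = Tlink1 n init0 m z.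
Proof. unfold sigmaH, Tlink1. apply firstHit_ext. intros. rewrite rk_ranks. reflexivity. Qed.

Definition sigmaTrunc n l m z : R :=
  if (Tend n init0 l m z <=? m)%nat then INR (Tlink1 n init0 m z) else 0.

Lemma E_sigma_trunc_ranks l p n m : E_sigma_trunc l p n m = Em l p m (sigmaTrunc n l m).
Proof.
  unfold E_sigma_trunc. apply Em_ext. intros z. unfold sigmaTrunc.
  rewrite TH_Tend, sigmaH_Tlink1. reflexivity.
Qed.

(* [busy1 n t]: N^(2) still misses packets at time t, so a success of link 1
   at step t+1 delivers one; [rho2 n m] is the rank of N^(2) at time m. *)
Definition busy1 n t (z : config) : R := if (ranks n init0 z t 2 <? n)%nat then 1 else 0.
Definition rho2 n m (z : config) : R := INR (ranks n init0 z m 2).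

Lemma rho2_step l p n m z : (1 <= l)%nat ->
  sumcfg p (layer l (S m)) z (rho2 n (S m)) = rho2 n m z + (1 - p 1%nat) * busy1 n m z.
Proof.
  intros Hl.
  assert (Hstep : forall w, rho2 n (S m) w = INR (ranks n init0 w m 2 +
            (if (w (S m) 1%nat && (ranks n init0 w m 2 <? n))%bool then 1 else 0))).
  { intros w. unfold rho2. rewrite ranks_step by lia.
    rewrite (ranks_source n init0 w m (2 - 1)) by lia. reflexivity. }
  assert (Hpast : forall w t i b, (t = S m)%nat ->
            ranks n init0 (upd w t i b) m 2 = ranks n init0 w m 2).
  { intros w t i b ->. apply ranks_local. intros t' i' Ht'.
    apply upd_other. intro E; inversion E; lia. }
  destruct l as [|l']; [lia|].
  assert (Hunused : forall w t i b, In (t, i) (map (fun i => (S m, i)) (seq 2 l')) ->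
            rho2 n (S m) (upd w t i b) = rho2 n (S m) w).
  { intros w t i b Hin. apply in_map_iff in Hin. destruct Hin as [i' [Ei Hi]].
    inversion Ei; subst. apply in_seq in Hi. rewrite !Hstep, Hpast by reflexivity.
    rewrite upd_other by (intro E; inversion E; lia). reflexivity. }
  unfold layer. simpl seq. simpl map. simpl sumcfg.
  rewrite !sumcfg_unused by exact Hunused.
  rewrite !Hstep, !Hpast by reflexivity. rewrite !upd_same. unfold rho2, busy1.
  simpl andb. rewrite plus_INR, Nat.add_0_r.
  destruct (ranks n init0 z m 2 <? n)%nat; simpl; ring.
Qed.

Lemma busy1_upto n t m : (t <= m)%nat -> depends_upto m (busy1 n t).
Proof.
  intros Ht z z' H. unfold busy1. rewrite (ranks_local n init0 z z' t); auto.
  intros; apply H; lia.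
Qed.

Lemma depends_upto_sumR m (f : nat -> config -> R) K :
  (forall t, (t < K)%nat -> depends_upto m (f t)) ->
  depends_upto m (fun z => sumR (fun t => f t z) K).
Proof.
  intros H z z' E. induction K as [|K IH]; simpl; auto.
  rewrite IH by (intros; apply H; lia). rewrite (H K ltac:(lia) z z' E). reflexivity.
Qed.

Lemma wald_link1 l p n m : (1 <= l)%nat ->
  Em l p m (rho2 n m) = (1 - p 1%nat) * Em l p m (fun z => sumR (fun t => busy1 n t z) m).
Proof.
  intros Hl. induction m as [|m IH].
  - simpl sumR. rewrite (Em_ext _ _ _ (rho2 n 0) (fun _ => 0)), !Em_cst by (intros z; unfold rho2; rewrite ranks_init by lia; reflexivity). ring.
  - rewrite Em_last, (Em_ext _ _ _ _ (fun z => rho2 n m z + (1 - p 1%nat) * busy1 n m z))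
      by (intros; apply rho2_step; auto).
    rewrite Em_plus, Em_scal, IH.
    rewrite (Em_horizon l p m (S m)).
    + simpl sumR. rewrite Em_plus. ring.
    + apply depends_upto_sumR. intros t Ht. apply busy1_upto. lia.
    + lia.
Qed.

(* Before sigma_n link 1 is busy, afterwards idle. *)
Lemma busy1_count n m z k : (k <= m)%nat ->
  sumR (fun t => busy1 n t z) k = INR (Nat.min k (Tlink1 n init0 m z)).
Proof.
  induction k as [|k IH]; intros Hk. reflexivity.
  simpl sumR. rewrite IH by lia.
  assert (L := firstHit_lt_iff _ m k (link1_upward n init0 z (ordered_init0 n)) ltac:(lia)).
  fold (Tlink1 n init0 m z) in L.
  assert (B := ranks_le_source n init0 (ordered_init0 n) z k 2).
  unfold busy1. destruct (Nat.ltb_spec (ranks n init0 z k 2) n).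
  - assert (H1 : (k < Tlink1 n init0 m z)%nat) by (apply L; apply Nat.eqb_neq; lia).
    replace (Nat.min (S k) (Tlink1 n init0 m z)) with (S (Nat.min k (Tlink1 n init0 m z))) by lia.
    rewrite S_INR. ring.
  - assert (~ (k < Tlink1 n init0 m z)%nat)
      by (intro H1; apply L in H1; apply Nat.eqb_neq in H1; lia).
    replace (Nat.min (S k) (Tlink1 n init0 m z)) with (Nat.min k (Tlink1 n init0 m z)) by lia.
    ring.
Qed.

(* On {T <= m} the truncated sigma is the busy count; otherwise both are <= m. *)
Lemma sigmaTrunc_vs_busy1 n l m z : (1 <= l)%nat ->
  Rabs (sigmaTrunc n l m z - sumR (fun t => busy1 n t z) m) <= INR m * notDone n init0 l m z.
Proof.
  intros Hl. rewrite (busy1_count n m z m) by lia. unfold sigmaTrunc, notDone.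
  assert (Hx := ordered_init0 n).
  destruct (complete n init0 l z m) eqn:Ed.
  - assert (HT := proj2 (Tend_le_iff n init0 l m z Hx) Ed).
    assert (HS := Tlink1_le_Tend n init0 l m z Hl Hx).
    replace (Tend n init0 l m z <=? m)%nat with true by (symmetry; apply Nat.leb_le; auto).
    replace (Nat.min m (Tlink1 n init0 m z)) with (Tlink1 n init0 m z) by lia.
    rewrite Rminus_diag, Rabs_R0. lra.
  - assert (HT : ~ (Tend n init0 l m z <= m)%nat)
      by (rewrite (Tend_le_iff n init0 l m z Hx); congruence).
    replace (Tend n init0 l m z <=? m)%nat with false by (symmetry; apply Nat.leb_gt; lia).
    assert (A : INR (Nat.min m (Tlink1 n init0 m z)) <= INR m) by (apply le_INR; lia).
    assert (B := pos_INR (Nat.min m (Tlink1 n init0 m z))).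
    rewrite Rabs_left1 by lra. lra.
Qed.

(* rho_2(m) = n once the sink is complete. *)
Lemma rho2_bounds n l m z : (1 <= l)%nat ->
  INR n * (1 - notDone n init0 l m z) <= rho2 n m z <= INR n.
Proof.
  intros Hl. unfold rho2, notDone. assert (Hx := ordered_init0 n).
  assert (B := ranks_le_source n init0 Hx z m 2).
  split; [|apply le_INR; auto].
  destruct (complete n init0 l z m) eqn:Ed.
  - unfold complete in Ed. apply Nat.eqb_eq in Ed.
    assert (A := ranks_antitone n init0 Hx z m (S l) 2 ltac:(lia)).
    rewrite Rminus_0_r, Rmult_1_r. apply le_INR. lia.
  - rewrite Rminus_diag, Rmult_0_r. apply pos_INR.
Qed.

(* |E[sigma_n; T_n <= m] - n/(1-p_1)| <= (m + n/(1-p_1)) P(T_n > m), combining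
   the Wald identity with rho_2(m) = n on {T_n <= m}. *)
Lemma E_sigma_error l p n m : (1 <= l)%nat -> erasure_probs l p ->
  Rabs (E_sigma_trunc l p n m - INR n / (1 - p 1%nat)) <=
  (INR m + INR n / (1 - p 1%nat)) * probNotDone l p n init0 m.
Proof.
  intros Hl Hp. assert (Hok := erasure_probs_ok l p Hp).
  assert (Hq : 0 < 1 - p 1%nat) by (specialize (Hp 1%nat ltac:(lia)); lra).
  set (a := probNotDone l p n init0 m). set (Erho := Em l p m (rho2 n m)).
  assert (Hsig : Rabs (Em l p m (sigmaTrunc n l m) - Erho / (1 - p 1%nat)) <= INR m * a).
  { unfold Erho, a, probNotDone. rewrite wald_link1 by auto.
    set (Ebusy := Em l p m (fun z => sumR (fun t => busy1 n t z) m)).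
    replace ((1 - p 1%nat) * Ebusy / (1 - p 1%nat)) with Ebusy by (field; lra).
    unfold Ebusy. rewrite <- Em_scal. apply Em_abs; auto. intros; apply sigmaTrunc_vs_busy1; auto. }
  assert (Hrho : INR n * (1 - a) <= Erho <= INR n).
  { unfold Erho, a, probNotDone. split.
    - assert (B : Em l p m (fun z => INR n + (- INR n) * notDone n init0 l m z) <= Em l p m (rho2 n m)).
      { apply Em_le; auto. intros z. assert (B := rho2_bounds n l m z Hl). lra. }
      rewrite Em_plus, Em_scal, Em_cst in B. lra.
    - rewrite <- (Em_cst l p m (INR n)). apply Em_le; auto. intros z. apply (rho2_bounds n l m z Hl). }
  rewrite E_sigma_trunc_ranks.
  replace (Em l p m (sigmaTrunc n l m) - INR n / (1 - p 1%nat)) with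
    ((Em l p m (sigmaTrunc n l m) - Erho / (1 - p 1%nat)) + (Erho - INR n) / (1 - p 1%nat))
    by (field; lra).
  eapply Rle_trans. apply Rabs_triang. rewrite Rmult_plus_distr_r.
  apply Rplus_le_compat; auto.
  unfold Rdiv. rewrite Rabs_mult, Rabs_inv, (Rabs_right (1 - p 1%nat)), Rabs_left1 by lra.
  apply Rmult_le_reg_r with (1 - p 1%nat); auto.
  field_simplify; lra.
Qed.

Lemma E_sigma_limit l p n : (1 <= l)%nat -> erasure_probs l p ->
  Un_cv (fun m => E_sigma_trunc l p n m) (INR n / (1 - p 1%nat)).
Proof.
  intros Hl Hp. set (a := probNotDone l p n init0).
  assert (Hma := probNotDone_weighted_cv l p n init0 Hl (ordered_init0 n) Hp). fold a in Hma.
  assert (Ha : Un_cv a 0).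
  { apply (cv_dominated a (fun m => INR m * a m)); auto. intros m Hm.
    rewrite Rminus_0_r, Rabs_right by (apply Rle_ge, probNotDone_nonneg, erasure_probs_ok; auto).
    assert (1 <= INR m) by (replace 1 with (INR 1) by reflexivity; apply le_INR; auto).
    assert (0 <= a m) by (apply probNotDone_nonneg, erasure_probs_ok; auto). nra. }
  apply (cv_dominated _ (fun m => (INR m + INR n / (1 - p 1%nat)) * a m)).
  - intros m _. apply E_sigma_error; auto.
  - replace 0 with (0 + INR n / (1 - p 1%nat) * 0) by ring.
    apply (Un_cv_ext (fun m => INR m * a m + INR n / (1 - p 1%nat) * a m)); [intros; ring|].
    apply CV_plus; auto. apply CV_mult; auto. apply cv_const.
Qed.

(** * E tau_n <= E tau_{n+1} *)

Lemma E_tau_trunc_ranks l p n m : E_tau_trunc l p n m = Em l p m (tauTrunc n init0 l m).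
Proof.
  unfold E_tau_trunc. apply Em_ext. intros z. unfold tauTrunc.
  rewrite TH_Tend, sigmaH_Tlink1. reflexivity.
Qed.

Lemma tauTrunc_first_step n l m z : (1 <= l)%nat ->
  tauTrunc (S n) init0 l (S m) z =
  tauTrunc (S n) (if z 1%nat 1%nat then init_one else init0) l m (shift z).
Proof.
  intros Hl. unfold tauTrunc, Tend, Tlink1.
  rewrite !firstHit_shift
    by (unfold complete; rewrite ranks_init by lia; reflexivity).
  unfold complete. rewrite !(firstHit_ext (fun t => ranks (S n) init0 z (S t) _ =? S n)%nat
           (fun t => ranks (S n) (if z 1%nat 1%nat then init_one else init0) (shift z) t _ =? S n)%nat)
    by (intros; rewrite ranks_after_first_step; reflexivity).
  reflexivity.
Qed.

Lemma E_tau_renewal l p n m : (1 <= l)%nat ->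
  E_tau_trunc l p (S n) (S m) =
  (1 - p 1%nat) * Em l p m (tauTrunc (S n) init_one l m) + p 1%nat * E_tau_trunc l p (S n) m.
Proof.
  intros Hl. rewrite !E_tau_trunc_ranks.
  rewrite (Em_ext _ _ _ _ (fun z => if z 1%nat 1%nat then tauTrunc (S n) init_one l m (shift z)
                                  else tauTrunc (S n) init0 l m (shift z)))
    by (intros z; rewrite tauTrunc_first_step by auto; destruct (z 1%nat 1%nat); reflexivity).
  apply Em_first_step; auto; eapply window_ignores_time0; apply tauTrunc_window.
Qed.

(* Coupling: on {T' <= m} for the system started from [init_one], both systems
   have the same sigma and the n-packet system completes no later. *)
Lemma tauTrunc_coupling n l m w : (1 <= l)%nat ->
  tauTrunc n init0 l m w - INR m * notDone (S n) init_one l m w <= tauTrunc (S n) init_one l m w.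
Proof.
  intros Hl. unfold notDone.
  destruct (complete (S n) init_one l w m) eqn:Ed.
  - assert (HT := proj2 (Tend_le_iff (S n) init_one l m w (ordered_init_one n)) Ed).
    assert (HS : Tlink1 (S n) init_one m w = Tlink1 n init0 m w).
    { unfold Tlink1. apply firstHit_ext. intros t _.
      destruct (ranks_coupling n w t 2) as [A _]. rewrite A by lia.
      destruct (Nat.eqb_spec (ranks n init0 w t 2) n);
        destruct (Nat.eqb_spec (S (ranks n init0 w t 2)) (S n)); auto; lia. }
    assert (HTT : (Tend n init0 l m w <= Tend (S n) init_one l m w)%nat).
    { apply firstHit_mono. intros t Et. unfold complete in *.
      apply Nat.eqb_eq in Et. apply Nat.eqb_eq.
      destruct (ranks_coupling n w t (S l)) as [_ A].
      assert (B := ranks_le_source n init0 (ordered_init0 n) w t (S l)). lia. }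
    unfold tauTrunc. rewrite HS.
    replace (Tend (S n) init_one l m w <=? m)%nat with true by (symmetry; apply Nat.leb_le; auto).
    replace (Tend n init0 l m w <=? m)%nat with true by (symmetry; apply Nat.leb_le; lia).
    rewrite Rmult_0_r, Rminus_0_r. apply le_INR. lia.
  - rewrite Rmult_1_r. assert (A := tauTrunc_nonneg (S n) init_one l m w).
    assert (B : tauTrunc n init0 l m w <= INR m).
    { unfold tauTrunc. destruct (Nat.leb_spec (Tend n init0 l m w) m).
      apply le_INR; lia. apply pos_INR. }
    lra.
Qed.

Lemma E_tau_limit_mono l p n a b : (1 <= l)%nat -> erasure_probs l p ->
  Un_cv (fun m => E_tau_trunc l p n m) a ->
  Un_cv (fun m => E_tau_trunc l p (S n) m) b -> a <= b.
Proof.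
  intros Hl Hp Ha Hb. assert (Hok := erasure_probs_ok l p Hp).
  assert (Hq : 0 < 1 - p 1%nat) by (specialize (Hp 1%nat ltac:(lia)); lra).
  set (A := fun m => Em l p m (tauTrunc (S n) init_one l m)).
  (* by the renewal equation, A m -> (b - p_1 b) / (1 - p_1) = b *)
  assert (HA : Un_cv A b).
  { assert (C := CV_mult _ _ _ _
      (CV_minus _ _ _ _ (CV_shift' _ 1 _ Hb) (CV_mult _ _ _ _ (cv_const (p 1%nat)) Hb))
      (cv_const (/ (1 - p 1%nat)))).
    replace b with ((b - p 1%nat * b) * / (1 - p 1%nat)) by (field; lra).
    refine (Un_cv_ext _ _ _ _ C). intros m. rewrite Nat.add_1_r, E_tau_renewal by auto.
    unfold A. field. lra. }
  (* the coupling bounds E tau_n up to m P(T' > m) -> 0 *)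
  assert (HL : Un_cv (fun m => E_tau_trunc l p n m - INR m * probNotDone l p (S n) init_one m) a).
  { replace a with (a - 0) by ring. apply CV_minus; auto.
    apply probNotDone_weighted_cv; auto. apply ordered_init_one. }
  eapply Rle_cv_lim; [|exact HL|exact HA]. intros m. simpl.
  unfold A, probNotDone. rewrite E_tau_trunc_ranks, <- Em_scal.
  assert (Hc : Em l p m (fun w => tauTrunc n init0 l m w + (-1) * (INR m * notDone (S n) init_one l m w))
               <= Em l p m (tauTrunc (S n) init_one l m)).
  { apply Em_le; auto. intros w. assert (X := tauTrunc_coupling n l m w Hl). lra. }
  rewrite Em_plus, Em_scal in Hc. lra.
Qed.

Theorem mainTheorem4 (l : nat) (p : nat -> R) (n : nat)
  (hl : (1 <= l)%nat)
  (hp : forall i, (1 <= i <= l)%nat -> 0 <= p i < 1)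
  (hn : (1 <= n)%nat) :
  Un_cv (fun m => E_sigma_trunc l p n m) (INR n / (1 - p 1%nat)) /\
  exists a b : R,
    Un_cv (fun m => E_tau_trunc l p n m) a /\
    Un_cv (fun m => E_tau_trunc l p (S n) m) b /\
    a <= b.
Proof.
  split; [apply E_sigma_limit; auto|].
  destruct (Em_tau_cv l p n init0 hl (ordered_init0 n) hp) as [a Ha].
  destruct (Em_tau_cv l p (S n) init0 hl (ordered_init0 (S n)) hp) as [b Hb].
  assert (Ha' : Un_cv (fun m => E_tau_trunc l p n m) a)
    by (refine (Un_cv_ext _ _ _ _ Ha); intros; symmetry; apply E_tau_trunc_ranks).
  assert (Hb' : Un_cv (fun m => E_tau_trunc l p (S n) m) b)
    by (refine (Un_cv_ext _ _ _ _ Hb); intros; symmetry; apply E_tau_trunc_ranks).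
  exists a, b. repeat split; auto. apply (E_tau_limit_mono l p n); auto.
Qed.
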